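(* Let $A=[\bm a_1,\dots,\bm a_n]$ be a $d\times n$ integer matrix of rank $d$ whose columns all lie on one affine hyperplane of $\mathbb{Q}^d$ not containing the origin, let $\bm w\in\mathbb{R}^n$ be a generic weight, let $\bm\beta\in\mathbb{C}^d$, and let $\bm v\in\mathbb{C}^n$ be a fake exponent of $H_A(\bm\beta)$ with respect to $\bm w$. If $I_{\bm 0}=\mathrm{nsupp}(\bm v)\subset C_{\bm w}$, then $I_{\bm 0}=K$.
   Context: $L=\ker_{\mathbb{Z}}A=\{\bm u\in\mathbb{Z}^n: A\bm u=\bm 0\}$. The toric ideal is $I_A=\langle \partial^{\bm u}-\partial^{\bm u'} : A\bm u=A\bm u',\ \bm u,\bm u'\in\mathbb{N}^n\rangle\subset\mathbb{C}[\partial_1,\dots,\partial_n]$ (multi-index notation). $H_A(\bm\beta)$ is the left ideal of the Weyl algebra $\mathbb{C}\langle x_1,\dots,x_n,\partial_1,\dots,\partial_n\rangle$ generated by $I_A$ and $\sum_j a_{ij}x_j\partial_j-\beta_i$ ($i=1,\dots,d$). A weight $\bm w$ is generic if the initial ideal $\mathrm{in}_{\bm w}I_A$ is a monomial ideal. Every $\bm u\in\mathbb{Z}^n$ is written uniquely as $\bm u=\bm u_+-\bm u_-$ with $\bm u_\pm\in\mathbb{N}^n$ of disjoint supports. For $\bm v\in\mathbb{C}^n$, $\bm u\in\mathbb{N}^n$, $[\bm v]_{\bm u}=\prod_j v_j(v_j-1)\cdots(v_j-u_j+1)$. A vector $\bm v$ is a fake exponent of $H_A(\bm\beta)$ with respect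 to $\bm w$ if $A\bm v=\bm\beta$ and $[\bm v]_{\bm u_+}=0$ for all $\bm u\in L$ with $\bm u_+\cdot\bm w>\bm u_-\cdot\bm w$. The negative support is $\mathrm{nsupp}(\bm v)=\{j: v_j\in\mathbb{Z}_{<0}\}$, and for $\bm u\in L$ one writes $I_{\bm u}=\mathrm{nsupp}(\bm v+\bm u)$. Let $\{\partial^{\bm g_+^{(i)}}-\partial^{\bm g_-^{(i)}}: i=1,\dots,m\}$ be the reduced Gröbner basis of $I_A$ with respect to $\bm w$, with $\partial^{\bm g_+^{(i)}}\in\mathrm{in}_{\bm w}I_A$, and put $\bm g^{(i)}=\bm g_+^{(i)}-\bm g_-^{(i)}$ and $C(\bm w)=\sum_{i=1}^m\mathbb{N}\bm g^{(i)}$. Define $\mathrm{NS}_{\bm w}(\bm v)$ as the set of those $I_{\bm u}$ ($\bm u\in L$) such that every $\bm u'\in L$ with $I_{\bm u'}=I_{\bm u}$ lies in $C(\bm w)$, and $K=\bigcap_{I\in\mathrm{NS}_{\bm w}(\bm v)}I$. A standard pair of a monomial ideal $M\subset\mathbb{C}[\bm\partial]$ is a pair $(\bm a,\sigma)$ with $\bm a\in\mathbb{N}^n$, $\sigma\subset\{1,\dots,n\}$ such that: (1) $a_i=0$ for $i\in\sigma$; (2) $\partial^{\bm a}\prod_{j\in\sigma}\partial_j^{b_j}\notin M$ for all $b_j\ge0$; (3) for every $l\notin\sigma$ there are $b_j\ge 0$ with $\partial^{\bm a}\partial_l^{b_l}\prod_{j\in\sigma}\partial_j^{b_j}\in M$.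 Let $\Delta_{\bm w}=\{\sigma : (\bm a,\sigma)\text{ a standard pair of }\mathrm{in}_{\bm w}I_A\}$ and $C_{\bm w}=\bigcap_{\sigma\in\Delta_{\bm w}}\sigma$. *)

From HB Require Import structures.
From mathcomp Require Import all_boot all_algebra.
From mathcomp Require Import reals.
From mathcomp.real_closed Require Import complex.
From mathcomp Require Import mpoly.

Set Implicit Arguments.
Unset Strict Implicit.
Unset Printing Implicit Defensive.

Import GRing.Theory Num.Theory.
Local Open Scope ring_scope.

Section PolyDefs.
Variables (F : comNzRingType) (n : nat).

Definition ideal_gen (S : {mpoly F[n]} -> Prop) (f : {mpoly F[n]}) : Prop :=
  exists k (c s : 'I_k -> {mpoly F[n]}),
    (forall i, S (s i)) /\ f = \sum_(i < k) c i * s i.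

Variable (R : numDomainType).

Definition mwt (w : 'I_n -> R) (m : 'X_{1..n}) : R :=
  \sum_(j < n) w j * (m j)%:R.

Definition in_w (w : 'I_n -> R) (f : {mpoly F[n]}) : {mpoly F[n]} :=
  \sum_(m <- msupp f | all (fun m' => mwt w m' <= mwt w m) (msupp f))
     f@_m *: 'X_[m].

Definition in_ideal (w : 'I_n -> R) (I : {mpoly F[n]} -> Prop) :
  {mpoly F[n]} -> Prop :=
  ideal_gen (fun g => exists f, I f /\ g = in_w w f).

Definition monomial_ideal (M : {mpoly F[n]} -> Prop) : Prop :=
  forall f, M f <-> ideal_gen (fun g => M g /\ exists m, g = 'X_[m]) f.

Definition reduced_GB (w : 'I_n -> R) (I : {mpoly F[n]} -> Prop)
  (k : nat) (G : 'I_k -> {mpoly F[n]}) : Prop :=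
  [/\ (forall i, I (G i)),
      (forall f, in_ideal w I f <->
                 ideal_gen (fun h => exists i, h = in_w w (G i)) f),
      (forall i, exists a, in_w w (G i) = 'X_[a]),
      (forall i j a b, i != j -> in_w w (G i) = 'X_[a] ->
                       in_w w (G j) = 'X_[b] -> ~~ (a <= b)%MM) &
      (forall i m, m \in msupp (G i) -> 'X_[m] != in_w w (G i) ->
                   ~ in_ideal w I 'X_[m])].

Definition std_pair (M : {mpoly F[n]} -> Prop) (a : 'X_{1..n})
  (sigma : {set 'I_n}) : Prop :=
  [/\ (forall i, i \in sigma -> a i = 0%N),
      (forall b : 'X_{1..n}, (forall j, j \notin sigma -> b j = 0%N) ->
          ~ M 'X_[a + b]) &
      (forall l, l \notin sigma -> exists b : 'X_{1..n},
          (forall j, j \notin sigma -> j != l -> b j = 0%N) /\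
          M 'X_[a + b])].

Definition in_Cw (M : {mpoly F[n]} -> Prop) (j : 'I_n) : Prop :=
  forall a sigma, std_pair M a sigma -> j \in sigma.

End PolyDefs.

Section ToricDefs.
Variables (d n : nat) (A : 'M[int]_(d, n)).

Definition mvec (m : 'X_{1..n}) : 'cV[int]_n := \col_j (m j)%:Z.

Definition toric_ideal (F : comNzRingType) : {mpoly F[n]} -> Prop :=
  ideal_gen (fun g => exists u u' : 'X_{1..n},
                 A *m mvec u = A *m mvec u' /\ g = 'X_[u] - 'X_[u']).

Definition generic (F : comNzRingType) (R : numDomainType)
  (w : 'I_n -> R) : Prop :=
  monomial_ideal (in_ideal w (@toric_ideal F)).

Definition inL (u : 'cV[int]_n) : Prop := A *m u = 0.

Definition upos (u : 'cV[int]_n) : 'X_{1..n} :=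
  [multinom absz (Num.max (u j ord0) 0) | j < n].
Definition uneg (u : 'cV[int]_n) : 'X_{1..n} :=
  [multinom absz (Num.max (- u j ord0) 0) | j < n].

Variable (C : numClosedFieldType).

Definition ffact (v : 'cV[C]_n) (m : 'X_{1..n}) : C :=
  \prod_(j < n) \prod_(k < m j) (v j ord0 - k%:R).

Definition fake_exponent (R : realDomainType) (w : 'I_n -> R)
  (beta : 'cV[C]_d) (v : 'cV[C]_n) : Prop :=
  map_mx (fun z : int => z%:~R) A *m v = beta /\
  forall u, inL u -> mwt w (uneg u) < mwt w (upos u) -> ffact v (upos u) = 0.

Definition negint (x : C) : Prop := exists k : nat, x = - (k.+1)%:R.

Definition nsupp (v : 'cV[C]_n) (j : 'I_n) : Prop := negint (v j ord0).

Definition Iu (v : 'cV[C]_n) (u : 'cV[int]_n) : 'I_n -> Prop :=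
  nsupp (v + map_mx (fun z : int => z%:~R) u).

Definition in_Cone (k : nat) (gp gm : 'I_k -> 'X_{1..n}) (u : 'cV[int]_n) :
  Prop :=
  exists c : 'I_k -> nat, u = \sum_(i < k) (c i)%:Z *: (mvec (gp i) - mvec (gm i)).

Definition inNS (v : 'cV[C]_n) (k : nat) (gp gm : 'I_k -> 'X_{1..n})
  (P : 'I_n -> Prop) : Prop :=
  exists u, [/\ inL u, (forall j, P j <-> Iu v u j) &
    (forall u', inL u' -> (forall j, Iu v u' j <-> Iu v u j) ->
                in_Cone gp gm u')].

Definition Kset (v : 'cV[C]_n) (k : nat) (gp gm : 'I_k -> 'X_{1..n})
  (j : 'I_n) : Prop :=
  forall P, inNS v gp gm P -> P j.

End ToricDefs.
Arguments toric_ideal {d n} A F.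

From HB Require Import structures.
From mathcomp Require Import all_boot all_algebra.
From mathcomp Require Import boolp reals.
From mathcomp.real_closed Require Import complex.
From mathcomp Require Import mpoly zify.
Import order.Order.TTheory GRing.Theory Num.Theory.
Local Open Scope ring_scope.
Set Implicit Arguments.
Unset Strict Implicit.
Unset Printing Implicit Defensive.

(* If (g_+^(i))_j > 0 for some j in C_w, deleting the j-th coordinate of g_+^(i)
   gives a standard monomial from which a standard pair avoiding j can be grown;
   so every g_+^(i) vanishes on C_w, every u in C(w) is <= 0 on C_w, and a
   negative integer v_j stays one in v + u: I_0 lies in every member of NS_w(v).
   Conversely I_0 is itself in NS_w(v).  If u in L has I_u = I_0, then u_- is
   standard, since the fake-exponent equations give [v]_(g_+^(i)) = 0.  Reducing
   u_+ by the Groebner basis, which terminates because A is homogeneous, reaches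
   the unique standard monomial of its A-fiber, i.e. u_-, so u = u_+ - u_- is a
   sum of moves g^(i). *)

Section IdealGen.
Variables (F : comNzRingType) (n : nat).
Implicit Types (S : {mpoly F[n]} -> Prop) (f : {mpoly F[n]}).

Lemma ideal_gen_sub S S' f :
  (forall g, S g -> S' g) -> ideal_gen S f -> ideal_gen S' f.
Proof.
by move=> sSS' [k [c [s [Ss ->]]]]; exists k, c, s; split=> // i; apply: sSS'.
Qed.

Lemma ideal_gen_mull S p f : ideal_gen S f -> ideal_gen S (p * f).
Proof.
move=> [k [c [s [Ss ->]]]]; exists k, (fun i => p * c i), s; split=> //.
by rewrite mulr_sumr; apply: eq_bigr => i _; rewrite mulrA.
Qed.

Lemma ideal_gen_mem S g : S g -> ideal_gen S g.
Proof.
by move=> Sg; exists 1%N, (fun _ => 1), (fun _ => g); rewrite big_ord1 mul1r.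
Qed.

Lemma ideal_genX_coef k (g : 'I_k -> 'X_{1..n}) f e :
  ideal_gen (fun h => exists i, h = 'X_[g i]) f -> f@_e != 0 ->
  exists i, (g i <= e)%MM.
Proof.
move=> [k' [c [s [Ss ->]]]]; apply: contra_neqP => /forallNP ndiv.
rewrite raddf_sum big1 // => i _; have [j ->] := Ss i.
apply/eqP; rewrite mcoeff_eq0 (perm_mem (msuppMX _ _)).
by apply/mapP => -[e' _ ee']; apply: (ndiv j); rewrite ee' lem_addr.
Qed.

Lemma ideal_genXX k (g : 'I_k -> 'X_{1..n}) e :
  ideal_gen (fun h => exists i, h = 'X_[g i]) ('X_[e] : {mpoly F[n]}) ->
  exists i, (g i <= e)%MM.
Proof. by move/ideal_genX_coef; apply; rewrite mcoeffX eqxx oner_neq0. Qed.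

End IdealGen.

Lemma in_w_coef (F : comNzRingType) n (R : numDomainType) (w : 'I_n -> R)
    (f : {mpoly F[n]}) e :
  (in_w w f)@_e = if (e \in msupp f) && all (fun e' => mwt w e' <= mwt w e) (msupp f)
                  then f@_e else 0.
Proof.
rewrite /in_w raddf_sum /= -big_filter.
under eq_bigr => e' _ do rewrite mcoeffZ mcoeffX.
case: ifP => [fe|nfe].
  rewrite (bigD1_seq e) /= ?mem_filter 1?andbC ?fe ?filter_uniq ?msupp_uniq //.
  rewrite eqxx mulr1 big1 ?addr0 // => e' /negPf; rewrite eq_sym => ->.
  by rewrite mulr0.
rewrite big_seq big1 // => e'; rewrite mem_filter => /andP[all_e' e'f].
by case: eqP => [ee'|_]; [rewrite -ee' e'f all_e' in nfe | rewrite mulr0].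
Qed.

Section Binomial.
Variables (F : numFieldType) (n : nat) (R : realDomainType) (w : 'I_n -> R).
Implicit Types p q : 'X_{1..n}.

Lemma msupp_binomial p q : p != q ->
  perm_eq (msupp ('X_[p] - 'X_[q] : {mpoly F[n]})) [:: p; q].
Proof.
move=> npq; have suppN : perm_eq (msupp (- 'X_[q] : {mpoly F[n]})) [:: q].
  by have := msuppN ('X_[q] : {mpoly F[n]}); rewrite msuppX.
rewrite (permPl (msuppD _)) ?msuppX ?(perm_cons p) // => e /=.
rewrite (perm_mem suppN) !inE; apply/negP => /andP[/eqP-> /eqP pq].
by rewrite pq eqxx in npq.
Qed.

Lemma in_w_binomial p q : p != q ->
  in_w w ('X_[p] - 'X_[q] : {mpoly F[n]}) =
    if mwt w q < mwt w p then 'X_[p]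
    else if mwt w p < mwt w q then - 'X_[q] else 'X_[p] - 'X_[q].
Proof.
move=> npq; apply/mpolyP => e; rewrite in_w_coef (perm_mem (msupp_binomial npq)).
rewrite (perm_all _ (msupp_binomial npq)) /= andbT !inE.
rewrite !(fun_if (fun f => f@_e)) mcoeffN mcoeffB !mcoeffX.
have [->|nep] := eqVneq e p; last have [->|neq] := eqVneq e q.
- rewrite [q == p]eq_sym (negPf npq) lexx /= subr0 oppr0.
  by case: (ltgtP (mwt w q) (mwt w p)).
- rewrite lexx /= sub0r andbT.
  by case: (ltgtP (mwt w q) (mwt w p)).
- by rewrite subrr mulr0n oppr0 !if_same.
Qed.

Lemma in_w_binomialX p q a :
  in_w w ('X_[p] - 'X_[q] : {mpoly F[n]}) = 'X_[a] -> a = p /\ mwt w q < mwt w p.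
Proof.
move=> ea; have coef_ge0 e : 0 <= ('X_[a] : {mpoly F[n]})@_e by rewrite mcoeffX ler0n.
have [epq|npq] := eqVneq p q.
  move: (congr1 (mcoeff a) ea); rewrite epq subrr in_w_coef mcoeff0 if_same.
  by rewrite mcoeffX eqxx => /eqP; rewrite eq_sym oner_eq0.
move: ea; rewrite in_w_binomial //; case: ltgtP => [qp|pq|eqw] ea.
- move: (congr1 (mcoeff p) ea); rewrite !mcoeffX eqxx.
  by case: eqP => // _ /eqP; rewrite oner_eq0.
- by move: (coef_ge0 q); rewrite -ea mcoeffN mcoeffX eqxx ler0N1.
- by move: (coef_ge0 q); rewrite -ea mcoeffB !mcoeffX eqxx (negPf npq) sub0r ler0N1.
Qed.

Lemma in_w_binomial_coef p q : p != q -> mwt w q <= mwt w p ->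
  (in_w w ('X_[p] - 'X_[q] : {mpoly F[n]}))@_p = 1.
Proof.
move=> npq; rewrite le_eqVlt in_w_binomial // => /orP[/eqP ->|->].
  by rewrite ltxx mcoeffB !mcoeffX eqxx [q == p]eq_sym (negPf npq) subr0.
by rewrite mcoeffX eqxx.
Qed.

End Binomial.

Section ToricFiber.
Variables (F : numFieldType) (d n : nat) (A : 'M[int]_(d, n)).

Let two_neq0 : (2%:R : F) != 0. Proof. by rewrite pnatr_eq0. Qed.

Lemma pow2_inj : injective (fun z : int => (2%:R : F) ^ z).
Proof.
move=> a b /= eab; apply/eqP; rewrite -subr_eq0.
have: (2%:R : F) ^ (a - b) == 1.
  by rewrite expfzDr // -invr_expz eab divff // expfz_neq0.
by rewrite pexprz_eq1 ?ler0n // (eqr_nat F 2 1) orbF.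
Qed.

Lemma meval_pow2X k u :
  meval (fun j => 2%:R ^ A k j) ('X_[u] : {mpoly F[n]}) = 2%:R ^ (A *m mvec u) k 0.
Proof.
rewrite mevalX mxE (big_morph _ (fun x y => expfzDr x y two_neq0) (expr0z _)).
by apply: eq_bigr => j _; rewrite /mvec mxE exprnP exprz_exp.
Qed.

Lemma toric_ideal_meval k f :
  toric_ideal A F f -> meval (fun j => 2%:R ^ A k j) f = 0.
Proof.
move=> [r [c [s [toric_s ->]]]]; rewrite raddf_sum big1 // => i _ /=.
have [u [u' [Auu' ->]]] := toric_s i.
by rewrite mevalM mevalB !meval_pow2X Auu' subrr mulr0.
Qed.

Lemma toric_ideal_binomial u u' :
  toric_ideal A F ('X_[u] - 'X_[u']) -> A *m mvec u = A *m mvec u'.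
Proof.
move=> toric_uu'; apply/matrixP => k j; rewrite [j]ord1; apply: pow2_inj => /=.
by apply/eqP; rewrite -subr_eq0 -!meval_pow2X -mevalB toric_ideal_meval.
Qed.

Lemma binomial_toric_ideal u u' :
  A *m mvec u = A *m mvec u' -> toric_ideal A F ('X_[u] - 'X_[u']).
Proof. by move=> Auu'; apply: ideal_gen_mem; exists u, u'. Qed.

End ToricFiber.

Section StandardPairs.
Variables (F : comNzRingType) (n : nat) (M : {mpoly F[n]} -> Prop).
Hypothesis M_up : forall e e', M 'X_[e] -> (e <= e')%MM -> M 'X_[e'].

(* sigma is a maximal set avoiding j such that the face through c with the
   coordinates in sigma zeroed misses M; maximality is condition (3). *)
Lemma std_pair_avoiding (j : 'I_n) (c b : 'X_{1..n}) :
  ~ M 'X_[c] -> (forall l, l != j -> b l = 0%N) -> M 'X_[c + b] ->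
  exists a sigma, std_pair M a sigma /\ j \notin sigma.
Proof.
move=> Mc bj Mcb.
pose a (s : {set 'I_n}) := [multinom (if l \in s then 0%N else c l) | l < n].
pose P (s : {set 'I_n}) := `[< j \notin s /\
  forall b' : 'X_{1..n}, (forall l, l \notin s -> b' l = 0%N) -> ~ M 'X_[a s + b'] >].
have P0 : P set0.
  apply/asboolP; split=> [|b' b'0]; first by rewrite inE.
  suff -> : (a set0 + b' = c)%MM by [].
  by apply/mnmP => l; rewrite !mnmE inE b'0 ?inE // addn0.
have [s /maxsetP [/asboolP [js Ps] smax] _] := maxset_exists P0.
exists (a s), s; split=> //; split=> // [l ls|l ls]; first by rewrite mnmE ls.
have [->|nlj] := eqVneq l j.
  pose cs := [multinom (if l' \in s then c l' else 0%N) | l' < n].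
  exists (cs + b)%MM; split; first by move=> l' l's l'j; rewrite !mnmE (negPf l's) bj.
  suff -> : (a s + (cs + b) = c + b)%MM by [].
  by apply/mnmP => l'; rewrite !mnmE; case: ifP.
have notP : ~ P (l |: s).
  by move/smax/(_ (subsetUr _ _))/setP/(_ l); rewrite !inE eqxx (negPf ls).
have [b' /not_implyP [b'supp /contrapT Mb']] :
    exists b' : 'X_{1..n}, ~ ((forall l', l' \notin l |: s -> b' l' = 0%N) ->
                  ~ M 'X_[a (l |: s) + b']).
  apply/existsNP => allb; apply: notP; apply/asboolP; split=> //.
  by rewrite !inE negb_or eq_sym nlj.
exists b'; split.
  by move=> l' l's l'l; apply: b'supp; rewrite !inE negb_or l'l.
apply: M_up Mb' _; apply/mnm_lepP => l'; rewrite !mnmE leq_add2r !inE.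
by case: (l' == l); case: (l' \in s).
Qed.

End StandardPairs.

Section MonomialVectors.
Variables (n : nat) (R : numDomainType) (w : 'I_n -> R).
Implicit Types e f : 'X_{1..n}.

Lemma mvecD e f : mvec (e + f)%MM = mvec e + mvec f.
Proof. by apply/matrixP => i j; rewrite !mxE mnmDE PoszD. Qed.

Lemma mvecB e f : (f <= e)%MM -> mvec (e - f)%MM = mvec e - mvec f.
Proof. by move/mnm_lepP => fe; apply/matrixP => i j; rewrite !mxE mnmBE subzn. Qed.

Lemma mwtD e f : mwt w (e + f)%MM = mwt w e + mwt w f.
Proof.
by rewrite /mwt -big_split; apply: eq_bigr => j _; rewrite mnmDE natrD mulrDr.
Qed.

Lemma mvec_upos_uneg (u : 'cV[int]_n) : u = mvec (upos u) - mvec (uneg u).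
Proof.
by apply/matrixP => i j; have -> : j = ord0 := ord1 j; rewrite !mxE !mnmE; lia.
Qed.

End MonomialVectors.

Definition homogeneous d n (A : 'M[int]_(d, n)) : Prop :=
  exists (h : 'rV[rat]_d) (c : rat),
    c != 0 /\ forall j, h *m col j (map_mx (fun z : int => z%:~R) A) = c%:M.

Section Homogeneous.
Variables (d n : nat) (A : 'M[int]_(d, n)).
Hypothesis A_homogeneous : homogeneous A.

Lemma mdeg_fiber u u' : A *m mvec u = A *m mvec u' -> mdeg u = mdeg u'.
Proof.
have [h [c [c_neq0 hA]]] := A_homogeneous.
suff hdeg e : \sum_k h 0 k * ((A *m mvec e) k 0)%:~R = c * (mdeg e)%:R.
  move=> Auu'; apply/eqP; rewrite -(eqr_nat rat) -(inj_eq (mulfI c_neq0)).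
  by rewrite -!hdeg Auu'.
under eq_bigr => k _ do rewrite mxE rmorph_sum mulr_sumr.
rewrite exchange_big mdegE natr_sum mulr_sumr; apply: eq_bigr => j _.
have := congr1 (fun N : 'M[rat]_1 => N 0 0) (hA j); rewrite !mxE eqxx mulr1n => <-.
by rewrite mulr_suml; apply: eq_bigr => k _; rewrite !mxE rmorphM mulrA.
Qed.

End Homogeneous.

Section Cone.
Variables (n k : nat) (gp gm : 'I_k -> 'X_{1..n}).

Lemma in_Cone0 : in_Cone gp gm 0.
Proof. by exists (fun _ => 0%N); rewrite big1 // => i _; rewrite scale0r. Qed.

Lemma in_ConeDg u i :
  in_Cone gp gm u -> in_Cone gp gm (u + (mvec (gp i) - mvec (gm i))).
Proof.
move=> [c ->]; exists (fun l => (c l + (l == i))%N).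
under [RHS]eq_bigr => l _ do rewrite PoszD scalerDl.
rewrite big_split /=; congr (_ + _).
by rewrite (bigD1 i) //= eqxx scale1r big1 ?addr0 // => l /negPf ->; rewrite scale0r.
Qed.

Lemma in_Cone_coord_le0 u j :
  in_Cone gp gm u -> (forall i, gp i j = 0%N) -> u j 0 <= 0.
Proof.
move=> [c ->] gpj0; rewrite summxE sumr_le0 // => i _.
by rewrite !mxE gpj0 sub0r mulrN oppr_le0 mulr_ge0.
Qed.

End Cone.

Section Exponents.
Variable C : numClosedFieldType.

Lemma negint_natr (t : nat) : ~ negint (t%:R : C).
Proof. by move=> [k /eqP]; rewrite -subr_eq0 opprK -natrD pnatr_eq0 addnS. Qed.

Lemma negint_addz (x : C) (z : int) : negint x -> z <= 0 -> negint (x + z%:~R).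
Proof.
move=> [k ->] z_le0; have [t ->] : exists t : nat, z = - t%:Z by exists `|z|%N; lia.
by exists (k + t)%N; rewrite rmorphN /= -pmulrn -addSn natrD opprD.
Qed.

Lemma negint_natrB (t u : nat) : (t < u)%N -> negint (t%:R - u%:R : C).
Proof.
by move=> tu; exists (u - t).-1; rewrite prednK ?subn_gt0 // natrB ?(ltnW tu) // opprB.
Qed.

Lemma ffact_eq0 n (v : 'cV[C]_n) e :
  ffact v e = 0 -> exists j (t : nat), (t < e j)%N /\ v j 0 = t%:R.
Proof.
move/eqP/prodf_eq0 => [j _ /prodf_eq0 [t _]]; rewrite subr_eq0 => /eqP vjt.
by exists j, t.
Qed.

End Exponents.

Section GroebnerBasis.
Variables (C : numClosedFieldType) (R : realDomainType) (d n : nat).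
Variables (A : 'M[int]_(d, n)) (w : 'I_n -> R) (k : nat) (gp gm : 'I_k -> 'X_{1..n}).
Hypothesis GB : reduced_GB w (toric_ideal A C) (fun i => 'X_[gp i] - 'X_[gm i]).
Local Notation M := (in_ideal w (toric_ideal A C)).

Definition standard e := forall i, ~~ (gp i <= e)%MM.

Lemma in_w_GB i : in_w w ('X_[gp i] - 'X_[gm i] : {mpoly C[n]}) = 'X_[gp i].
Proof.
by case: GB => _ _ monGB _ _; have [a /[dup] /in_w_binomialX [->]] := monGB i.
Qed.

Lemma mwt_GB i : mwt w (gm i) < mwt w (gp i).
Proof. by case: GB => _ _ monGB _ _; have [a /in_w_binomialX []] := monGB i. Qed.

Lemma GB_fiber i : A *m mvec (gp i) = A *m mvec (gm i).
Proof. by case: GB => toricGB _ _ _ _; apply: toric_ideal_binomial (toricGB i). Qed.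

Lemma GB_minimal i j : i != j -> ~~ (gp i <= gp j)%MM.
Proof. by case: GB => _ _ _ minGB _ ij; apply: minGB ij (in_w_GB i) (in_w_GB j). Qed.

Lemma initial_idealE f : M f <-> ideal_gen (fun h => exists i, h = 'X_[gp i]) f.
Proof.
case: GB => _ -> _ _ _.
by split; apply: ideal_gen_sub => g [i ->]; exists i; rewrite in_w_GB.
Qed.

Lemma initial_ideal_coef f e : M f -> f@_e != 0 -> exists i, (gp i <= e)%MM.
Proof. by move/initial_idealE/ideal_genX_coef; apply. Qed.

Lemma initial_idealXP e : M 'X_[e] <-> exists i, (gp i <= e)%MM.
Proof.
split=> [/initial_idealE/ideal_genXX //|[i /submK <-]].
by rewrite mpolyXD; apply/initial_idealE/ideal_gen_mull/ideal_gen_mem; exists i.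
Qed.

Lemma standard_fiber_uniq c q :
  standard c -> standard q -> A *m mvec c = A *m mvec q -> c = q.
Proof.
wlog le_qc : c q / mwt w q <= mwt w c.
  move=> wlog_cq stc stq Acq.
  have [le_qc|/ltW le_cq] := leP (mwt w q) (mwt w c); first exact: wlog_cq.
  by symmetry; apply: wlog_cq.
move=> stc _ Acq; apply/eqP/negPn/negP => ncq.
have M_in_w : M (in_w w ('X_[c] - 'X_[q])).
  apply: ideal_gen_mem; exists ('X_[c] - 'X_[q]); split=> //.
  exact: binomial_toric_ideal.
have coef_c : (in_w w ('X_[c] - 'X_[q] : {mpoly C[n]}))@_c != 0.
  by rewrite in_w_binomial_coef ?oner_neq0.
have [i gpc] := initial_ideal_coef M_in_w coef_c.
by have := stc i; rewrite gpc.
Qed.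

Lemma initial_idealX_le e e' : M 'X_[e] -> (e <= e')%MM -> M 'X_[e'].
Proof.
move=> /initial_idealXP [i gpe] ee'; apply/initial_idealXP.
by exists i; apply: lepm_trans ee'.
Qed.

Lemma gp_eq0_in_Cw j : in_Cw M j -> forall i, gp i j = 0%N.
Proof.
move=> Cw_j i; apply/eqP/negPn/negP => gpij.
pose c := [multinom (if l == j then 0%N else gp i l) | l < n].
pose b := [multinom (if l == j then gp i l else 0%N) | l < n].
have Mc : ~ M 'X_[c].
  move/initial_idealXP => [i' gpc]; have [ii'|ni'i] := eqVneq i' i.
    by move/mnm_lepP: gpc => /(_ j); rewrite ii' mnmE eqxx leqn0 (negPf gpij).
  have := GB_minimal ni'i; rewrite (lepm_trans gpc) //.
  by apply/mnm_lepP => l; rewrite mnmE; case: ifP.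
have bj l : l != j -> b l = 0%N by rewrite mnmE => /negPf ->.
have Mcb : M 'X_[c + b].
  apply/initial_idealXP; exists i; apply/mnm_lepP => l; rewrite !mnmE.
  by case: ifP; rewrite ?addn0.
have [a [sigma [std_as jsigma]]] := std_pair_avoiding initial_idealX_le Mc bj Mcb.
by rewrite (Cw_j _ _ std_as) in jsigma.
Qed.

Hypothesis A_homogeneous : homogeneous A.

Lemma descent_step e i : (gp i <= e)%MM ->
  let e' := (e - gp i + gm i)%MM in
  [/\ mdeg e' = mdeg e, mwt w e' < mwt w e
     & mvec e = mvec e' + (mvec (gp i) - mvec (gm i))].
Proof.
move=> gpe e'; split; rewrite /e'.
- by rewrite mdegD -(mdeg_fiber A_homogeneous (GB_fiber i)) -mdegD submK.
- by rewrite -{2}(submK gpe) !mwtD ltrD2l mwt_GB.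
- by rewrite mvecD mvecB // addrACA subrr addr0 subrK.
Qed.

Lemma normal_form e : exists c,
  [/\ A *m mvec c = A *m mvec e, in_Cone gp gm (mvec e - mvec c) & standard c].
Proof.
suff N_bounded N x : (mdeg x < N)%N -> exists c,
    [/\ A *m mvec c = A *m mvec x, in_Cone gp gm (mvec x - mvec c) & standard c].
  exact: N_bounded (ltnSn _).
pose below y := [set b : 'X_{1..n < N} | mwt w (val b) < mwt w y].
have [r] := ubnP #|below x|; elim: r x => // r IH x /ltnSE below_x deg_x.
have [/existsP [i gpx]|/existsPn st_x] := boolP [exists i, (gp i <= x)%MM]; last first.
  by exists x; split=> //; rewrite subrr; exact: in_Cone0.
have [deg_y lt_yx xE] := descent_step gpx.
set y := (x - gp i + gm i)%MM in deg_y lt_yx xE.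
have deg_yN : (mdeg y < N)%N by rewrite deg_y.
have lt_below : (#|below y| < #|below x|)%N.
  apply/proper_card/properP; split.
    by apply/subsetP => b; rewrite !inE => /lt_trans; apply.
  by exists (BMultinom deg_yN); rewrite !inE //= ltxx.
have [c [Ac cone_c st_c]] := IH y (leq_trans lt_below below_x) deg_yN.
exists c; split=> //; first by rewrite Ac xE mulmxDr mulmxBr GB_fiber subrr addr0.
by rewrite xE addrAC; apply: in_ConeDg.
Qed.

Variables (beta : 'cV[C]_d) (v : 'cV[C]_n).
Hypothesis v_fake : fake_exponent A w beta v.

Lemma fake_exponent_gp i : exists j (t : nat), (t < gp i j)%N /\ v j 0 = t%:R.
Proof.
pose g := mvec (gp i) - mvec (gm i).
have Lg : inL A g by rewrite /inL mulmxBr GB_fiber subrr.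
have gE : (upos g + gm i = uneg g + gp i)%MM.
  by apply/mnmP => l; rewrite !mnmE /g !mxE; lia.
have lt_g : mwt w (uneg g) < mwt w (upos g).
  by rewrite -(ltrD2r (mwt w (gp i))) -mwtD -gE mwtD ltrD2l mwt_GB.
have [j [t [t_lt vjt]]] := ffact_eq0 (v_fake.2 g Lg lt_g).
by exists j, t; split=> //; apply: leq_trans t_lt _; rewrite /g !mnmE !mxE; lia.
Qed.

Lemma nsupp_cone u :
  inL A u -> (forall j, Iu v u j -> nsupp v j) -> in_Cone gp gm u.
Proof.
move=> Lu Iu_nsupp.
have st_q : standard (uneg u).
  move=> i; apply/negP => gpq.
  have [j [t [t_lt vjt]]] := fake_exponent_gp i.
  have lt_tq : (t < uneg u j)%N := leq_trans t_lt (mnm_lepP gpq j).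
  have : Iu v u j.
    rewrite /Iu /nsupp !mxE vjt.
    have -> : u j ord0 = - (uneg u j)%:Z by move: lt_tq; rewrite mnmE; lia.
    by rewrite rmorphN /= -pmulrn; exact: negint_natrB.
  by move/Iu_nsupp; rewrite /nsupp vjt; exact: negint_natr.
have [c [Ac cone_c st_c]] := normal_form (upos u).
have Apq : A *m mvec (upos u) = A *m mvec (uneg u).
  by apply/eqP; rewrite -subr_eq0 -mulmxBr -mvec_upos_uneg; apply/eqP.
by rewrite (mvec_upos_uneg u) -(standard_fiber_uniq st_c st_q) // Ac.
Qed.

End GroebnerBasis.

Theorem theorem3p1 (R : realType) (d n : nat) (A : 'M[int]_(d, n))
  (hrank : \rank (map_mx (fun z : int => (z%:~R : rat)) A) = d)
  (hhyp : exists (h : 'rV[rat]_d) (c : rat),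
            c != 0 /\ forall j, h *m col j (map_mx (fun z : int => z%:~R) A) = c%:M)
  (w : 'I_n -> R) (hgen : generic A R[i] w)
  (beta : 'cV[R[i]]_d) (v : 'cV[R[i]]_n) (hv : fake_exponent A w beta v)
  (m : nat) (gp gm : 'I_m -> 'X_{1..n})
  (hGB : reduced_GB w (toric_ideal A R[i]) (fun i => 'X_[gp i] - 'X_[gm i]))
  (hlead : forall i, in_ideal w (toric_ideal A R[i]) 'X_[gp i])
  (hC : forall j, nsupp v j -> in_Cw (in_ideal w (toric_ideal A R[i])) j) :
  forall j, nsupp v j <-> Kset A v gp gm j.
Proof.
have Iu0 j : Iu v 0 j <-> nsupp v j by rewrite /Iu map_mx0 addr0.
move=> j; split=> [vj P [u [Lu PE u_cone]]|Kj].
- have cone_u := u_cone u Lu (fun _ => iff_refl _).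
  apply/PE; rewrite /Iu /nsupp !mxE; apply: (negint_addz vj).
  exact: (in_Cone_coord_le0 cone_u (gp_eq0_in_Cw hGB (hC j vj))).
- apply: Kj; exists 0; split=> [|l|u' Lu' Iu'E]; first by rewrite /inL mulmx0.
    by rewrite Iu0.
  by apply: (nsupp_cone hGB hhyp hv Lu') => l /Iu'E /Iu0.
Qed.
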